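(* For all integers $n,k\ge 0$ and every real (or complex) $x\neq 1$, \[ \sum_{d=0}^k d^n x^d = \sum_{i=0}^n \frac{e_{n,i}\, x^i - e_{n,i}^k\, x^{k+i+1}}{(1-x)^{n+1}}. \]
   Context: Convention: $0^0=1$. The Eulerian numbers $e_{n,i}$ are defined by $e_{0,0}=1$, $e_{n,i}=0$ whenever $i\le 0$ (unless $n=i=0$) or $i>n$, and $e_{n,i}=i\,e_{n-1,i}+(n-i+1)\,e_{n-1,i-1}$ for all other integers $n,i$. For a fixed integer parameter $k$, the numbers $e^k_{n,i}$ are defined by $e^k_{0,0}=1$, $e^k_{n,i}=0$ whenever $i<0$ or $i>n$, and $e^k_{n,i}=(k+i+1)\,e^k_{n-1,i}+(n-k-i)\,e^k_{n-1,i-1}$ for all other integers $n,i$. *)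

From mathcomp Require Import all_boot all_order all_algebra.
Set Implicit Arguments. Unset Strict Implicit. Unset Printing Implicit Defensive.
Import Order.TTheory GRing.Theory Num.Theory.
Local Open Scope ring_scope.

Fixpoint eulerian (n i : nat) {struct n} : int :=
  match n with
  | 0%N => if i is 0%N then 1 else 0
  | m.+1 =>
      match i with
      | 0%N => 0
      | j.+1 => if (m.+1 < j.+1)%N then 0
                else (j.+1)%:Z * eulerian m j.+1
                     + ((m.+1)%:Z - (j.+1)%:Z + 1) * eulerian m j
      end
  end.

Fixpoint eulerianK (k n i : nat) {struct n} : int :=
  match n with
  | 0%N => if i is 0%N then 1 else 0
  | m.+1 =>
      if (m.+1 < i)%N then 0 else
      match i with
      | 0%N => (k%:Z + 1) * eulerianK k m 0
      | j.+1 => (k%:Z + (j.+1)%:Z + 1) * eulerianK k m j.+1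
                + ((m.+1)%:Z - k%:Z - (j.+1)%:Z) * eulerianK k m j
      end
  end.

Example e_3 : [seq eulerian 3 i | i <- iota 0 5] = [:: 0; 1; 4; 1; 0].
Proof. by []. Qed.
Example ek_1 : [seq eulerianK 2 1 i | i <- iota 0 3] = [:: 3; -2; 0].
Proof. by []. Qed.

(* With theta = X d/dX, the power sums S_n = \sum_(d <= k) d^n X^d satisfy
   S_(n+1) = theta S_n.  Applying theta to
   (1 - X)^(n+1) S_n = E_n - X^(k+1) F_n  (for n = 0 the geometric sum)
   and multiplying by 1 - X yields the same identity at n + 1, because the
   defining recurrences of e_(n,i) and e^k_(n,i) are the coefficientwise form of
     E_(n+1) = (1 - X) theta E_n + (n+1) X E_n,
     F_(n+1) = (1 - X) ((k+1) F_n + theta F_n) + (n+1) X F_n.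
   Evaluating at x <> 1 and dividing by (1 - x)^(n+1) gives the theorem. *)

From mathcomp Require Import all_boot all_order all_algebra.
From mathcomp Require Import ring.
Import Order.TTheory GRing.Theory Num.Theory.
Local Open Scope ring_scope.

Lemma eulerian_eq0_gt n i : (n < i)%N -> eulerian n i = 0.
Proof. by case: n => [|n]; case: i => [|i] //= ->. Qed.

Lemma eulerianK_eq0_gt k n i : (n < i)%N -> eulerianK k n i = 0.
Proof. by case: n => [|n]; case: i => [|i] //= ->. Qed.

Lemma eulerianSS n i : eulerian n.+1 i.+1 =
  i.+1%:Z * eulerian n i.+1 + (n.+1%:Z - i.+1%:Z + 1) * eulerian n i.
Proof.
rewrite /=; case: ifP => //; rewrite ltnS => lt_n_i.
by rewrite !eulerian_eq0_gt ?mulr0 ?addr0 // ltnW.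
Qed.

Lemma eulerianKSS k n i : eulerianK k n.+1 i.+1 =
  (k%:Z + i.+1%:Z + 1) * eulerianK k n i.+1
  + (n.+1%:Z - k%:Z - i.+1%:Z) * eulerianK k n i.
Proof.
rewrite /=; case: ifP => //; rewrite ltnS => lt_n_i.
by rewrite !eulerianK_eq0_gt ?mulr0 ?addr0 // ltnW.
Qed.

Section EulerianPolynomials.
Variable R : comNzRingType.
Implicit Types p q : {poly R}.

Definition xderiv p := 'X * p^`().

Lemma coef_xderiv p i : (xderiv p)`_i = p`_i *+ i.
Proof. by rewrite coefXM coef_deriv; case: i. Qed.

Lemma xderivB p q : xderiv (p - q) = xderiv p - xderiv q.
Proof. by rewrite /xderiv derivB mulrBr. Qed.

Lemma xderivM p q : xderiv (p * q) = xderiv p * q + p * xderiv q.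
Proof. by rewrite /xderiv derivM; ring. Qed.

Lemma xderivXn m : xderiv 'X^m = 'X^m *+ m.
Proof.
by rewrite /xderiv derivXn mulrnAr -exprS; case: m => [|m]; rewrite ?mulr0n.
Qed.

Lemma xderiv_exp_subX m :
  xderiv ((1 - 'X) ^+ m.+1) = - ('X * (1 - 'X) ^+ m) *+ m.+1.
Proof. by rewrite /xderiv deriv_exp derivB derivX -polyC1 derivC; ring. Qed.

Definition eulerian_poly n : {poly R} := \poly_(i < n.+1) (eulerian n i)%:~R.

Lemma coef_eulerian_poly n i : (eulerian_poly n)`_i = (eulerian n i)%:~R.
Proof. by rewrite coef_poly; case: ltnP => // /eulerian_eq0_gt ->. Qed.

Lemma eulerian_polyS n : eulerian_poly n.+1 =
  (1 - 'X) * xderiv (eulerian_poly n) + ('X * eulerian_poly n) *+ n.+1.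
Proof.
apply/polyP => -[|i]; rewrite coef_eulerian_poly coefD mulrBl mul1r coefB.
  by rewrite !(coef_xderiv, coefMn, coefXM) /= subrr mul0rn addr0.
rewrite eulerianSS.
by rewrite !(coef_xderiv, coefMn, coefXM, coef_eulerian_poly) /=; ring.
Qed.

Variable k : nat.

Definition eulerianK_poly n : {poly R} :=
  \poly_(i < n.+1) (eulerianK k n i)%:~R.

Lemma coef_eulerianK_poly n i : (eulerianK_poly n)`_i = (eulerianK k n i)%:~R.
Proof. by rewrite coef_poly; case: ltnP => // /eulerianK_eq0_gt ->. Qed.

Lemma eulerianK_polyS n : eulerianK_poly n.+1 =
  (1 - 'X) * (eulerianK_poly n *+ k.+1 + xderiv (eulerianK_poly n))
  + ('X * eulerianK_poly n) *+ n.+1.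
Proof.
apply/polyP => -[|i]; rewrite coef_eulerianK_poly coefD mulrBl mul1r coefB.
  rewrite !(coef_xderiv, coefMn, coefD, coefXM, coef_eulerianK_poly) /=.
  ring.
rewrite eulerianKSS.
by rewrite !(coef_xderiv, coefMn, coefD, coefXM, coef_eulerianK_poly) /=; ring.
Qed.

Definition power_sum_poly n : {poly R} := \sum_(d < k.+1) (d%:R ^+ n) *: 'X^d.

Lemma power_sum_polyS n : power_sum_poly n.+1 = xderiv (power_sum_poly n).
Proof.
rewrite /power_sum_poly /xderiv raddf_sum big_distrr /=.
apply: eq_bigr => d _; rewrite derivZ -scalerAr -/(xderiv _) xderivXn.
by rewrite -scaler_nat scalerA -exprSr.
Qed.

Lemma power_sum_eulerian_poly0 :
  (1 - 'X) * power_sum_poly 0 = eulerian_poly 0 - 'X^(k.+1) * eulerianK_poly 0.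
Proof.
have poly1_eq1 (e : nat -> int) :
    e 0%N = 1 -> \poly_(i < 1) (e i)%:~R = 1 :> {poly R}.
  by move=> e0; apply/polyP => -[|i]; rewrite coef_poly coef1 ?e0.
rewrite /eulerian_poly /eulerianK_poly !poly1_eq1 // mulr1.
rewrite -[1 - 'X]opprB -[1 - _]opprB subrX1 mulNr /power_sum_poly.
by congr (- (_ * _)); apply: eq_bigr => d _; rewrite scale1r.
Qed.

Lemma power_sum_eulerian_poly n : (1 - 'X) ^+ n.+1 * power_sum_poly n =
  eulerian_poly n - 'X^(k.+1) * eulerianK_poly n.
Proof.
elim: n => [|n IHn]; first by rewrite expr1 power_sum_eulerian_poly0.
have leibniz_step : (1 - 'X) ^+ n.+2 * power_sum_poly n.+1 =
    (1 - 'X) * xderiv ((1 - 'X) ^+ n.+1 * power_sum_poly n)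
    + ('X * ((1 - 'X) ^+ n.+1 * power_sum_poly n)) *+ n.+1.
  by rewrite power_sum_polyS xderivM xderiv_exp_subX !exprS; ring.
rewrite leibniz_step IHn xderivB xderivM xderivXn.
by rewrite eulerian_polyS eulerianK_polyS; ring.
Qed.

End EulerianPolynomials.

Theorem proposition2p1 (R : numFieldType) (n k : nat) (x : R) (hx : x != 1) :
  \sum_(0 <= d < k.+1) (d%:R) ^+ n * x ^+ d
  = \sum_(0 <= i < n.+1)
      ((eulerian n i)%:~R * x ^+ i - (eulerianK k n i)%:~R * x ^+ (k + i + 1))
        / (1 - x) ^+ n.+1.
Proof.
have denom_neq0 : (1 - x) ^+ n.+1 != 0 by rewrite expf_neq0 // subr_eq0 eq_sym.
apply: (mulfI denom_neq0).
rewrite -mulr_suml [RHS]mulrC divfK // sumrB !big_mkord.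
have := congr1 (horner^~ x) (power_sum_eulerian_poly R k n).
rewrite hornerM hornerD hornerN hornerM horner_exp hornerXn !horner_poly.
rewrite hornerD hornerN hornerX hornerC horner_sum.
under eq_bigr do rewrite hornerZ hornerXn.
move=> ->; rewrite big_distrr /=; congr (_ - _); apply: eq_bigr => i _.
by rewrite addnAC addn1 exprD mulrCA.
Qed.
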